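(* Let $n,k\geq 1$ and let ${\bf m}=(m_1,\dots,m_k)$ be an array of nonnegative integers. For every permutation $\tau\in\mathfrak{S}_k$ there exists a bijection $\mathfrak{a}\mapsto\mathfrak{b}$ from $\mathcal{A}_n^k({\bf m})$ onto $\mathcal{A}_n^k({\bf m}')$, where ${\bf m}'=(m_{\tau(1)},\dots,m_{\tau(k)})$, such that $\mathrm{DEZ}(\mathfrak{a})=\mathrm{DEZ}(\mathfrak{b})$ and $\mathrm{Der}(\mathfrak{a})=\mathrm{Der}(\mathfrak{b})$.
   Context: $\mathfrak{S}_n$ is the set of permutations of $[n]=\{1,\dots,n\}$; $\mathrm{FIX}(\pi)=\{i:\pi(i)=i\}$. For $k\ge1$, a $k$-arrangement of $[n]$ is a pair $\mathfrak{a}=(\pi,\phi)$ with $\pi\in\mathfrak{S}_n$ and $\phi:\mathrm{FIX}(\pi)\to\{-1,\dots,-k\}$ arbitrary; $\mathcal{A}_n^k$ is the set of them. The positive reduction of an integer word replaces every occurrence of its $i$-th smallest positive letter by $i$, for all $i$ (negative letters unchanged). The derangement form $\mathrm{df}_k(\mathfrak{a})$ is obtained from $\pi(1)\cdots\pi(n)$ by replacing $\pi(i)$ with $\phi(i)$ for each $i\in\mathrm{FIX}(\pi)$ and then applying positive reduction. For an integer word $w=w_1\cdots w_n$, $\mathrm{DES}(w)=\{i\in[n-1]:w_i>w_{i+1}\}$, and $\mathrm{Pos}(w)$ is the subword of positive letters. $\mathrm{DEZ}(\mathfrak{a})=\mathrm{DES}(\mathrm{df}_k(\mathfrak{a}))$,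 $\mathrm{Der}(\mathfrak{a})=\mathrm{Pos}(\mathrm{df}_k(\mathfrak{a}))$, $\mathrm{fix}_i(\mathfrak{a})=|\{j\in\mathrm{FIX}(\pi):\phi(j)=-i\}|$, and $\mathcal{A}_n^k({\bf m})=\{\mathfrak{a}\in\mathcal{A}_n^k:\mathrm{fix}_i(\mathfrak{a})=m_i,\ 1\le i\le k\}$. *)

From mathcomp Require Import all_boot all_order all_fingroup all_algebra.
Set Implicit Arguments. Unset Strict Implicit. Unset Printing Implicit Defensive.
Import Order.TTheory GRing.Theory Num.Theory.

(* Positions and values are 0-based ordinals 'I_n representing [n] = {1..n}
   via i |-> i+1.  Labels -1..-k are represented by c : 'I_k meaning -(c+1). *)

Definition arr_raw (n k : nat) := ('S_n * {ffun 'I_n -> option 'I_k})%type.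

Definition is_arr n k (a : arr_raw n k) : bool :=
  [forall i : 'I_n, (a.1 i == i) == (a.2 i != None)].

Definition fixc n k (a : arr_raw n k) (c : 'I_k) : nat :=
  #|[set j : 'I_n | a.2 j == Some c]|.

Definition Anm n k (m : 'I_k -> nat) : {set arr_raw n k} :=
  [set a | is_arr a && [forall c : 'I_k, fixc a c == m c]].

Definition posred (w : seq int) : seq int :=
  [seq (if (0 < x)%R
        then Posz (size (undup [seq y <- w | (0 < y)%R && (y <= x)%R]))
        else x) | x <- w].

Definition raw_word n k (a : arr_raw n k) : seq int :=
  [seq (if a.1 j == j then
          match a.2 j with Some c => - Posz ((c : nat).+1) | None => 0 end
        else Posz ((a.1 j : nat).+1))%R | j <- enum 'I_n].

Definition df n k (a : arr_raw n k) : seq int := posred (raw_word a).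

(* DES(w) = { i in [size w - 1] : w_i > w_{i+1} }, 1-based *)
Definition DES (w : seq int) : seq nat :=
  [seq i <- iota 1 (size w).-1 | (nth 0 w i < nth 0 w i.-1)%R].

Definition Pos (w : seq int) : seq int := [seq x <- w | (0 < x)%R].

Definition DEZ n k (a : arr_raw n k) : seq nat := DES (df a).
Definition Der n k (a : arr_raw n k) : seq int := Pos (df a).

From mathcomp Require Import all_boot all_order all_fingroup all_algebra.
From mathcomp Require Import zify.
Set Implicit Arguments. Unset Strict Implicit. Unset Printing Implicit Defensive.
Import Order.TTheory GRing.Theory Num.Theory.

(* The derangement form of a = (pi, phi) is determined by pi and by the set of
   positions i such that i and i+1 are both fixed and phi(i) > phi(i+1); so
   DEZ and Der are functions of this pair, and it suffices to show that each
   of its fibres has the same size in A_n^k(m) and in A_n^k(m').  For fixed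
   pi this is a statement about labellings of FIX(pi) with content m and a
   prescribed set of such label ascents.  By Moebius inversion over subsets it
   is enough to count labellings whose ascent set lies inside a given B:
   those are exactly the labellings that are weakly monotone along each
   maximal run of consecutive fixed points not cut at B, and relabelling by
   tau^-1 followed by re-sorting every run is a bijection between those of
   content m and those of content m o tau. *)

Section FiberBijection.
Variables (T : finType) (K : eqType) (key : T -> K).

Definition fiber (A : {set T}) (x : K) : seq T := enum [set a in A | key a == x].

Definition fiber_transfer (A B : {set T}) (a : T) : T :=
  nth a (fiber B (key a)) (index a (fiber A (key a))).

Lemma mem_fiber A x a : (a \in fiber A x) = (a \in A) && (key a == x).
Proof. by rewrite mem_enum inE. Qed.

Variables A B : {set T}.
Hypothesis card_fiber : forall x, #|[set a in A | key a == x]| = #|[set b in B | key b == x]|.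

Lemma size_fiber x : size (fiber A x) = size (fiber B x).
Proof. by rewrite -!cardE card_fiber. Qed.

Lemma fiber_transfer_in a :
  a \in A -> (fiber_transfer A B a \in B) && (key (fiber_transfer A B a) == key a).
Proof.
move=> Aa; rewrite -mem_fiber; apply: mem_nth.
by rewrite -size_fiber index_mem mem_fiber Aa eqxx.
Qed.

Lemma fiber_transferK : {in A, cancel (fiber_transfer A B) (fiber_transfer B A)}.
Proof.
move=> a Aa; have /andP[_ /eqP ka] := fiber_transfer_in Aa.
have aA : a \in fiber A (key a) by rewrite mem_fiber Aa eqxx.
have ia : index a (fiber A (key a)) < size (fiber B (key a)).
  by rewrite -size_fiber index_mem.
rewrite {1}/fiber_transfer ka /fiber_transfer index_uniq ?enum_uniq //.
by rewrite (set_nth_default a) ?index_mem // nth_index.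
Qed.

End FiberBijection.

Lemma fiber_bijection (T : finType) (K : eqType) (key : T -> K) (A B : {set T}) :
    (forall x, #|[set a in A | key a == x]| = #|[set b in B | key b == x]|) ->
  exists f : T -> T,
    [/\ {in A, forall a, f a \in B}, {in A &, injective f},
        (forall b, b \in B -> exists2 a, a \in A & f a = b) &
        {in A, forall a, key (f a) = key a}].
Proof.
move=> cardAB; have cardBA x := esym (cardAB x).
exists (fiber_transfer key A B); split.
- by move=> a /(fiber_transfer_in cardAB) /andP[].
- exact: can_in_inj (fiber_transferK cardAB).
- move=> b Bb; exists (fiber_transfer key B A b); last exact: fiber_transferK.
  by have /andP[] := fiber_transfer_in cardBA Bb.
- by move=> a /(fiber_transfer_in cardAB) /andP[_ /eqP].
Qed.

Lemma eq_from_subset_sums (T : finType) (g1 g2 : {set T} -> nat) :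
    (forall B : {set T},
       \sum_(A : {set T} | A \subset B) g1 A = \sum_(A : {set T} | A \subset B) g2 A) ->
  g1 =1 g2.
Proof.
move=> eq_sums A; have [N] := ubnP #|A|; elim: N A => // N IH A ltAN.
have := eq_sums A; rewrite (bigD1 A) //= [in RHS](bigD1 A) //=.
suff -> : \sum_(C : {set T} | (C \subset A) && (C != A)) g1 C =
          \sum_(C : {set T} | (C \subset A) && (C != A)) g2 C by move/addIn.
apply: eq_bigr => C /andP[sCA nCA]; apply: IH.
have /proper_card : C \proper A by rewrite properEneq nCA sCA.
lia.
Qed.

(* [run_sizes link n] lists the lengths of the maximal runs of [0, n) in which
   i and i+1 lie in the same run iff [link i]. *)
Fixpoint run_sizes (link : nat -> bool) (n : nat) : seq nat :=
  match n with
  | 0 => [::]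
  | n'.+1 => match run_sizes (fun i => link i.+1) n' with
             | [::] => [:: 1]
             | a :: r => if link 0 then a.+1 :: r else 1 :: a :: r
             end
  end.

Lemma sumn_run_sizes link n : sumn (run_sizes link n) = n.
Proof.
elim: n link => [|n IH] link //=; have := IH (fun i => link i.+1).
by case: run_sizes => [|a r] /= <- //; case: (link 0) => /=; lia.
Qed.

Lemma run_sizes_gt0 link n : all (leq 1) (run_sizes link n).
Proof.
elim: n link => [|n IH] link //=; have := IH (fun i => link i.+1).
by case: run_sizes => [|a r] //= /andP[a0 r0]; case: (link 0); rewrite /= ?a0 r0.
Qed.

Lemma linked_rel_sorted_runs (T : Type) (x0 : T) (r : rel T) (link : nat -> bool)
    (s : seq T) :
  (forall i, i.+1 < size s -> link i -> r (nth x0 s i) (nth x0 s i.+1)) <->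
  all (sorted r) (reshape (run_sizes link (size s)) s).
Proof.
elim: s link => [|x s IH] link; first by split.
have := IH (fun i => link i.+1); rewrite /=.
have := sumn_run_sizes (fun i => link i.+1) (size s).
have := run_sizes_gt0 (fun i => link i.+1) (size s).
case: run_sizes => [|[|a] rr] //=.
  by move=> _ /esym/size0nil -> _; split.
case: s {IH} => [|y s] //= _ _ IHs.
case link0: (link 0) => /=; rewrite ?andbT -?andbA; split.
- move=> h; rewrite (h 0) //; apply/IHs => i; exact: h i.+1.
- by move=> /andP[rxy /IHs h] [|i] //= /h.
- by move=> h; apply/IHs => i; apply: h i.+1.
- by move=> /IHs h [|i] //= hi; [rewrite link0 | exact: h].
Qed.

(* Decreasing on labels, unlabelled entries first: a run sorted for this
   order has no label ascent. *)
Definition desc_label {k : nat} (x y : option 'I_k) : bool :=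
  match x, y with
  | Some c, Some d => d <= c
  | None, _ => true
  | Some _, None => false
  end.

Lemma desc_label_total k : total (@desc_label k).
Proof. by case=> [c|] [d|] //=; apply: leq_total. Qed.

Lemma desc_label_trans k : transitive (@desc_label k).
Proof. by case=> [c|] [d|] [e|] //= ? ?; lia. Qed.

Lemma desc_label_anti k : antisymmetric (@desc_label k).
Proof. by case=> [c|] [d|] //= /andP[? ?]; congr Some; apply: val_inj => /=; lia. Qed.

Definition both_labelled {k : nat} (x y : option 'I_k) : bool := isSome x && isSome y.

Section SortRuns.
Variables (k : nat) (link : nat -> bool) (n : nat).
Implicit Types (s b : seq (option 'I_k)) (g : 'I_k -> 'I_k).

Definition runs s := reshape (run_sizes link n) s.

Definition sort_run g b := sort desc_label (map (omap g) b).

Definition sort_runs g s := flatten (map (sort_run g) (runs s)).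

Lemma runsK s : size s = n -> flatten (runs s) = s.
Proof. by move=> sz; rewrite reshapeKr // sumn_run_sizes sz. Qed.

Lemma perm_sort_runs g s : size s = n -> perm_eq (sort_runs g s) (map (omap g) s).
Proof.
move=> /runsK {2}<-; rewrite /sort_runs map_flatten.
by elim: (runs s) => //= b bs IH; rewrite perm_cat // perm_sort.
Qed.

Lemma size_sort_runs g s : size s = n -> size (sort_runs g s) = n.
Proof. by move=> sz; rewrite (perm_size (perm_sort_runs g sz)) size_map. Qed.

Lemma runs_sort_runs g s : size s = n -> runs (sort_runs g s) = map (sort_run g) (runs s).
Proof.
move=> sz; suff shape_sorted : shape (map (sort_run g) (runs s)) = run_sizes link n.
  by rewrite /runs /sort_runs -{1}shape_sorted flattenK.
rewrite /shape -map_comp (eq_map (g := size)) => [|b /=]; last first.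
  by rewrite size_sort size_map.
by rewrite -/(shape _) reshapeKl // sumn_run_sizes sz.
Qed.

Lemma sorted_runs_sort_runs g s :
  size s = n -> all (sorted desc_label) (runs (sort_runs g s)).
Proof.
move=> sz; rewrite runs_sort_runs // all_map.
by apply/allP => b _; apply: (sort_sorted (@desc_label_total k)).
Qed.

Lemma isSome_sort_run g b :
  sorted both_labelled b -> map isSome (sort_run g b) = map isSome b.
Proof.
case: b => [|x [|y b]] //; first by case: x.
move=> sorted_b; have labelled_b : all isSome [:: x, y & b].
  elim: b x y sorted_b => [|z b IH] x y /=; first by rewrite !andbT.
  by move=> /andP[/andP[-> _]]; apply: IH.
have labelled_sb : all isSome (sort_run g [:: x, y & b]).
  by rewrite (perm_all _ (permEl (perm_sort _ _))) all_map; apply: sub_all labelled_b => -[].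
have all_true s : all isSome s -> map isSome s = nseq (size s) true.
  move=> labelled_s; rewrite -(size_map isSome); apply/all_pred1P.
  by rewrite all_map; apply: sub_all labelled_s => -[].
by rewrite !all_true // size_sort size_map.
Qed.

Lemma isSome_sort_runs g s : size s = n -> all (sorted both_labelled) (runs s) ->
  map isSome (sort_runs g s) = map isSome s.
Proof.
move=> sz /allP sorted_runs; rewrite -{2}(runsK sz) /sort_runs !map_flatten.
by rewrite -map_comp; congr flatten; apply/eq_in_map => b /sorted_runs /(isSome_sort_run g).
Qed.

Lemma sort_runsK g g' s : cancel g g' -> size s = n ->
  all (sorted desc_label) (runs s) -> sort_runs g' (sort_runs g s) = s.
Proof.
move=> gK sz /allP sorted_runs; rewrite {1}/sort_runs runs_sort_runs // -map_comp.
rewrite -{2}(runsK sz); congr flatten; rewrite -[RHS]map_id.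
apply/eq_in_map => b /sorted_runs sorted_b /=.
rewrite -[RHS](sorted_sort (@desc_label_trans k) sorted_b).
apply/(perm_sortP (@desc_label_total k) (@desc_label_trans k) (@desc_label_anti k)).
apply: perm_trans (perm_map _ (permEl (perm_sort _ _))) _.
by rewrite -map_comp (eq_map (g := id)) ?map_id // => -[c|] //=; rewrite gK.
Qed.

Lemma count_sort_runs (g : {perm 'I_k}) s c : size s = n ->
  count_mem (Some c) (sort_runs g s) = count_mem (Some (g^-1 c)%g) s.
Proof.
move=> sz; rewrite (seq.permP (perm_sort_runs g sz)) count_map; apply: eq_count.
by case=> //= y; rewrite !(inj_eq Some_inj) (can2_eq (permK g) (permKV g)).
Qed.

End SortRuns.

Section Labellings.
Variables (n k : nat) (P : nat -> bool).
Implicit Types (t : n.-tuple (option 'I_k)) (A B : {set 'I_n}) (m : 'I_k -> nat).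

Definition label_ascent (s : seq (option 'I_k)) (i : nat) : bool :=
  if (nth None s i, nth None s i.+1) is (Some c, Some d) then c < d else false.

Definition ascents t : {set 'I_n} := [set i : 'I_n | label_ascent t i].

Definition has_pattern t : bool := map isSome t == mkseq P n.

Definition has_content m t : bool := [forall c, count_mem (Some c) t == m c].

Definition run_link B (i : nat) : bool :=
  [&& P i, P i.+1 & i \notin [seq val j | j in B]].

Definition labellings_below m B : {set n.-tuple (option 'I_k)} :=
  [set t | [&& has_pattern t, has_content m t & ascents t \subset B]].

Definition labellings m A : {set n.-tuple (option 'I_k)} :=
  [set t | [&& has_pattern t, has_content m t & ascents t == A]].

Lemma has_pattern_nth t i : has_pattern t -> i < n -> nth None t i = P i :> bool.
Proof.
move=> /eqP pattern_t lt_in; have := congr1 (nth false ^~ i) pattern_t.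
by rewrite (nth_map None) ?size_tuple // nth_mkseq.
Qed.

Lemma runs_both_labelled B t :
  has_pattern t -> all (sorted both_labelled) (runs (run_link B) n t).
Proof.
move=> pattern_t; have := linked_rel_sorted_runs None both_labelled (run_link B) t.
rewrite size_tuple => <- i lt_i1n /and3P[Pi Pi1 _].
by rewrite /both_labelled !has_pattern_nth // ?Pi ?Pi1 // ltnW.
Qed.

Lemma ascents_subsetP B t : has_pattern t ->
  reflect (all (sorted desc_label) (runs (run_link B) n t)) (ascents t \subset B).
Proof.
move=> pattern_t; have runsP := linked_rel_sorted_runs None desc_label (run_link B) t.
rewrite size_tuple in runsP; apply: (iffP subsetP) => [sub_B | /runsP runs_sorted j].
- apply/runsP => i lt_i1n /and3P[Pi Pi1 notBi]; have lt_in := ltnW lt_i1n.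
  have notBj : Ordinal lt_in \notin B by rewrite -(mem_image val_inj).
  have := has_pattern_nth pattern_t lt_in; have := has_pattern_nth pattern_t lt_i1n.
  rewrite Pi Pi1; case ti: (nth None t i) => [c|] //.
  case ti1: (nth None t i.+1) => [d|] //= _ _.
  rewrite leqNgt; apply: contra notBj => lt_cd; apply: sub_B.
  by rewrite inE /label_ascent /= ti ti1.
- rewrite inE /label_ascent.
  case tj: (nth None t j) => [c|] //; case tj1: (nth None t j.+1) => [d|] // lt_cd.
  have lt_j1n : j.+1 < n.
    by rewrite ltnNge; apply/negP => ?; move: tj1; rewrite nth_default ?size_tuple.
  have Pj : P j by rewrite -(has_pattern_nth pattern_t) ?tj // ltnW.
  have Pj1 : P j.+1 by rewrite -(has_pattern_nth pattern_t) ?tj1.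
  apply: contraLR lt_cd => notBj; rewrite -leqNgt.
  have := runs_sorted j; rewrite tj tj1; apply => //.
  by rewrite /run_link Pj Pj1 (mem_image val_inj).
Qed.

Lemma card_labellings_below_le (g : {perm 'I_k}) m m' B :
  (forall c, m' (g c) = m c) -> #|labellings_below m B| <= #|labellings_below m' B|.
Proof.
move=> m'g; pose relabel h t : n.-tuple _ := insubd t (sort_runs (run_link B) n h t).
have relabelE h t : val (relabel h t) = sort_runs (run_link B) n h t.
  by rewrite val_insubd size_sort_runs ?size_tuple ?eqxx.
rewrite -(card_in_imset (f := relabel g)); last first.
  apply: (can_in_inj (g := relabel g^-1%g)) => t.
  rewrite inE => /and3P[pattern_t _ /(ascents_subsetP _ pattern_t) sorted_t].
  by apply: val_inj; rewrite !relabelE sort_runsK ?size_tuple //; apply: permK.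
apply/subset_leq_card/subsetP => _ /imsetP[t + ->].
rewrite !inE => /and3P[pattern_t /forallP content_t sub_B].
have pattern_gt : has_pattern (relabel g t).
  by rewrite /has_pattern relabelE isSome_sort_runs ?size_tuple ?runs_both_labelled.
rewrite pattern_gt /=; apply/andP; split.
- apply/forallP => c; rewrite relabelE count_sort_runs ?size_tuple //.
  by rewrite -[c in m' c](permKV g) m'g.
- apply/(ascents_subsetP _ pattern_gt); rewrite relabelE.
  by apply: sorted_runs_sort_runs; rewrite size_tuple.
Qed.

Lemma card_labellings_below_relabel (g : {perm 'I_k}) m m' B :
  (forall c, m' (g c) = m c) -> #|labellings_below m B| = #|labellings_below m' B|.
Proof.
move=> m'g; apply/eqP; rewrite eqn_leq (card_labellings_below_le B m'g) /=.
by apply: (card_labellings_below_le (g := g^-1%g)) => c; rewrite -[c in RHS](permKV g) m'g.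
Qed.

Lemma card_labellings_below m B :
  #|labellings_below m B| = \sum_(A : {set 'I_n} | A \subset B) #|labellings m A|.
Proof.
rewrite -sum1_card (partition_big ascents (fun A : {set 'I_n} => A \subset B)) => [|t].
  apply: eq_bigr => A sub_AB; rewrite -sum1_card; apply: eq_bigl => t; rewrite !inE.
  by case: eqP => [->|]; rewrite ?sub_AB ?andbT ?andbF.
by rewrite inE => /and3P[].
Qed.

Lemma card_labellings_relabel (g : {perm 'I_k}) m m' A :
  (forall c, m' (g c) = m c) -> #|labellings m A| = #|labellings m' A|.
Proof.
move=> m'g; apply: (@eq_from_subset_sums _ (fun A => #|labellings m A|)
                                           (fun A => #|labellings m' A|)) => B.
by rewrite -!card_labellings_below; apply: card_labellings_below_relabel.
Qed.

End Labellings.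

Section ArrangementFibers.
Variables n k : nat.
Implicit Types (a : arr_raw n k) (pi : 'S_n) (m : 'I_k -> nat).

Definition labels a : n.-tuple (option 'I_k) := [tuple a.2 i | i < n].

Definition fixed_pattern pi (i : nat) : bool :=
  [exists j : 'I_n, (val j == i) && (pi j == j)].

Definition arr_key a : 'S_n * {set 'I_n} := (a.1, ascents (labels a)).

Lemma fixed_pattern_ord pi (j : 'I_n) : fixed_pattern pi j = (pi j == j).
Proof.
apply/existsP/idP => [[j' /andP[/eqP/val_inj -> //]] | fixed_j].
by exists j; rewrite eqxx.
Qed.

Lemma card_preim_count (T : eqType) (f : 'I_n -> T) x :
  #|[set j | f j == x]| = count_mem x [tuple f j | j < n].
Proof.
rewrite cardsE cardE size_filter /= count_map -enumT.
by apply: eq_count => j; rewrite !inE.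
Qed.

Lemma labels_pattern a : is_arr a -> has_pattern (fixed_pattern a.1) (labels a).
Proof.
move=> /forallP arr_a; apply/eqP/(@eq_from_nth _ false).
  by rewrite size_map size_tuple size_mkseq.
move=> i; rewrite size_map size_tuple => lt_in.
rewrite (nth_map None) ?size_tuple // nth_mkseq // -[i]/(val (Ordinal lt_in)).
by rewrite nth_mktuple fixed_pattern_ord (eqP (arr_a _)); case: (a.2 _).
Qed.

Lemma card_Anm_fiber m pi A :
  #|[set a in Anm n m | arr_key a == (pi, A)]| = #|labellings (fixed_pattern pi) m A|.
Proof.
set S := [set a in Anm n m | _].
have labels_inj : {in S &, injective labels}.
  move=> [p1 f1] [p2 f2]; rewrite !inE => /andP[_ /eqP[/= -> _]] /andP[_ /eqP[/= -> _]] e.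
  by congr pair; apply/ffunP => i; have := congr1 (fun t => tnth t i) e; rewrite !tnth_mktuple.
rewrite -(card_in_imset labels_inj); apply: eq_card => t; rewrite inE.
apply/imsetP/idP => [[a] | /and3P[pattern_t /forallP content_t /eqP asc_t]].
  rewrite !inE => /andP[/andP[arr_a /forallP fix_a] /eqP[<- <-]] ->.
  rewrite labels_pattern // eqxx andbT.
  by apply/forallP => c; rewrite -card_preim_count; apply: fix_a.
pose a : arr_raw n k := (pi, [ffun i => tnth t i]).
have labels_a : labels a = t.
  by apply: eq_from_tnth => i; rewrite tnth_mktuple ffunE.
exists a => //; rewrite !inE /arr_key labels_a asc_t eqxx andbT.
apply/andP; split.
- apply/forallP => i /=; rewrite ffunE -fixed_pattern_ord.
  by rewrite -(has_pattern_nth pattern_t (ltn_ord i)) (tnth_nth None); case: nth.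
- apply/forallP => c; rewrite /fixc card_preim_count.
  by rewrite -[[tuple _ | _ < n]]/(labels a) labels_a content_t.
Qed.

Lemma Anm_is_arr m a : a \in Anm n m -> is_arr a.
Proof. by rewrite inE => /andP[]. Qed.

End ArrangementFibers.

Section DerangementForm.
Variables n k : nat.
Implicit Types a b : arr_raw n k.

Definition pos_rank a (j : 'I_n) : nat :=
  size (undup [seq y <- raw_word a | (0 < y)%R && (y <= Posz (a.1 j).+1)%R]).

Definition df_entry a (j : 'I_n) : int :=
  if a.1 j == j then (if a.2 j is Some c then - Posz c.+1 else 0)%R
  else Posz (pos_rank a j).

Lemma filter_map_agree (T : Type) (p : pred int) (F G : T -> int) (s : seq T) :
    (forall x, F x = G x \/ ~~ p (F x) /\ ~~ p (G x)) ->
  filter p (map F s) = filter p (map G s).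
Proof.
move=> FG; elim: s => //= x s ->.
by case: (FG x) => [-> | [/negbTE -> /negbTE ->]].
Qed.

Lemma df_entries a : is_arr a -> df a = map (df_entry a) (enum 'I_n).
Proof.
move=> /forallP arr_a; rewrite /df /posred {1}/raw_word -map_comp.
by apply: eq_map => j /=; rewrite /df_entry /pos_rank; case: (a.1 j == j); case: (a.2 j).
Qed.

Lemma eq_pos_rank a b j : a.1 = b.1 -> pos_rank a j = pos_rank b j.
Proof.
move=> eq_pi; rewrite /pos_rank eq_pi; congr (size (undup _)).
rewrite /raw_word; apply: filter_map_agree => i; rewrite eq_pi.
case: ifP => _; last by left.
by right; split; [case: (a.2 i) | case: (b.2 i)] => // c; rewrite oppr_gt0.
Qed.

Lemma eq_df_entry_unfixed a b j : a.1 = b.1 -> a.1 j != j -> df_entry a j = df_entry b j.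
Proof.
by move=> eq_pi /negbTE unfixed_j; rewrite /df_entry -eq_pi unfixed_j (eq_pos_rank j eq_pi).
Qed.

Lemma fixed_labelled a j : is_arr a -> a.1 j == j -> exists c, a.2 j = Some c.
Proof. by move=> /forallP/(_ j)/eqP -> ; case: (a.2 j) => // c _; exists c. Qed.

Lemma df_descent_arr_key a b (j j' : 'I_n) :
    is_arr a -> is_arr b -> arr_key a = arr_key b -> val j = (val j').+1 ->
  (df_entry a j < df_entry a j')%R = (df_entry b j < df_entry b j')%R.
Proof.
move=> arr_a arr_b [eq_pi eq_asc] jj'.
have labelled i : a.1 i == i -> exists2 c, a.2 i = Some c & exists d, b.2 i = Some d.
  move=> fixed_i; have [c ->] := fixed_labelled arr_a fixed_i; exists c => //.
  by apply: (fixed_labelled arr_b); rewrite -eq_pi.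
have [fixed_j'|unfixed_j'] := boolP (a.1 j' == j');
  have [fixed_j|unfixed_j] := boolP (a.1 j == j).
- have [c' ac' [d' bd']] := labelled _ fixed_j'; have [c ac [d bd]] := labelled _ fixed_j.
  have := congr1 (fun A : {set 'I_n} => j' \in A) eq_asc.
  rewrite !inE /label_ascent -jj' !nth_mktuple /df_entry -eq_pi fixed_j fixed_j'.
  by rewrite ac ac' bd bd' !ltrN2 !ltz_nat !ltnS.
- have [c' ac' [d' bd']] := labelled _ fixed_j'.
  by rewrite /df_entry -eq_pi fixed_j' (negbTE unfixed_j) ac' bd'; lia.
- have [c ac [d bd]] := labelled _ fixed_j.
  by rewrite /df_entry -eq_pi fixed_j (negbTE unfixed_j') ac bd; lia.
- by rewrite !(eq_df_entry_unfixed eq_pi unfixed_j) (eq_df_entry_unfixed eq_pi unfixed_j').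
Qed.

Lemma nth_map_enum_ord (F : 'I_n -> int) i (lt_in : i < n) :
  nth 0%R (map F (enum 'I_n)) i = F (Ordinal lt_in).
Proof.
rewrite (nth_map (Ordinal lt_in)) ?size_enum_ord //; congr F.
by apply: val_inj; rewrite /= nth_enum_ord.
Qed.

Lemma DEZ_Der_arr_key a b : is_arr a -> is_arr b -> arr_key a = arr_key b ->
  DEZ a = DEZ b /\ Der a = Der b.
Proof.
move=> arr_a arr_b key_ab; have eq_pi : a.1 = b.1 := congr1 fst key_ab.
split.
- rewrite /DEZ /DES !df_entries // !size_map; apply: eq_in_filter => i.
  rewrite mem_iota -enumT size_enum_ord => /andP[i_gt0 lt_i].
  have lt_in : i < n by lia.
  have lt_i1n : i.-1 < n by lia.
  rewrite !(nth_map_enum_ord _ lt_in) !(nth_map_enum_ord _ lt_i1n).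
  by apply: df_descent_arr_key => //=; lia.
- rewrite /Der /Pos !df_entries //; apply: filter_map_agree => j.
  have [fixed_j|unfixed_j] := boolP (a.1 j == j); last by left; apply: eq_df_entry_unfixed.
  right; rewrite /df_entry -eq_pi fixed_j.
  by split; [case: (a.2 j) | case: (b.2 j)] => // c; rewrite oppr_gt0.
Qed.

End DerangementForm.

Theorem lemma2p2 (n k : nat) (hn : (1 <= n)%N) (hk : (1 <= k)%N)
    (m : 'I_k -> nat) (tau : 'S_k) :
  exists f : arr_raw n k -> arr_raw n k,
    [/\ {in Anm n m, forall a, f a \in Anm n (fun i => m (tau i))},
        {in Anm n m &, injective f},
        (forall b, b \in Anm n (fun i => m (tau i)) ->
           exists2 a, a \in Anm n m & f a = b) &
        {in Anm n m, forall a, DEZ (f a) = DEZ a /\ Der (f a) = Der a}].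
Proof.
have card_fibers x : #|[set a in Anm n m | arr_key a == x]| =
                     #|[set b in Anm n (fun i => m (tau i)) | arr_key b == x]|.
  case: x => pi A; rewrite !card_Anm_fiber.
  by apply: (@card_labellings_relabel _ _ _ tau^-1%g) => c; rewrite permKV.
have [f [f_in f_inj f_onto f_key]] := fiber_bijection card_fibers.
exists f; split => // a Aa.
by apply: DEZ_Der_arr_key (f_key a Aa); [exact: Anm_is_arr (f_in a Aa) | exact: Anm_is_arr Aa].
Qed.
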